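(* For every digraph $X=(V,E)$ and every edge $e\in E$, $u_X(m)=u_{X\setminus e}(m)-u_{X/e}(m)$.
   Context: A digraph $X=(V,E)$: $V$ finite, $E\subset\{(u,v)\in V\times V\mid u\ne v\}$. $\Sigma_V$ is the set of bijections $\sigma:[n]\to V$ ($n=|V|$), $X\mathrm{Des}(\sigma)=\{i\in[n-1]\mid(\sigma_i,\sigma_{i+1})\in E\}$; $F_I=\sum x_{i_1}\cdots x_{i_n}$ over $1\le i_1\le\cdots\le i_n$ with $i_j<i_{j+1}$ for $j\in I$; $U_X=\sum_{\sigma\in\Sigma_V}F_{X\mathrm{Des}(\sigma)}$; the Redei–Berge polynomial is $u_X(m)=U_X(1,\dots,1,0,\dots)$ with $m$ ones (equivalently, the number of pairs $(f,\sigma)$ with $f:V\to[m]$ and $\sigma\in\Sigma_V$ satisfying $f(\sigma_1)\le\cdots\le f(\sigma_n)$ and $f(\sigma_j)<f(\sigma_{j+1})$ whenever $(\sigma_j,\sigma_{j+1})\in E$). Deletion: $X\setminus e=(V,E\setminus\{e\})$. Contraction by $e=(u,v)$: $X/e=(V',E')$ with $V'=(V\setminus\{u,v\})\cup\{e\}$, $E'$ containing all edges of $E$ with both endpoints different from $u,v$, and for $w\ne u,v$: $(w,e)\in E'$ iff $(w,u)\in E$, and $(e,w)\in E'$ iff $(v,w)\in E$ (no other edges). *)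

From mathcomp Require Import all_boot all_order all_algebra.
Set Implicit Arguments. Unset Strict Implicit. Unset Printing Implicit Defensive.

(* A digraph is a finite vertex type V with an edge relation E : rel V
   ((u,v) is an edge iff E u v); loops are excluded by the hypothesis
   [irreflexive E] in the theorem. *)

Definition compat (V : finType) (E : rel V) (m : nat) (f : {ffun V -> 'I_m})
  : rel V := fun x y => (f x <= f y) && (E x y ==> (f x < f y)).

Definition redei_berge (V : finType) (E : rel V) (m : nat) : nat :=
  \sum_(sigma : {ffun 'I_#|V| -> V} | injectiveb sigma)
     #|[set f : {ffun V -> 'I_m} |
         sorted (compat E f) [seq sigma i | i <- enum 'I_#|V|]]|.

Definition del_rel (V : finType) (E : rel V) (u v : V) : rel V :=
  fun x y => E x y && ~~ ((x == u) && (y == v)).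

(* Vertex set of the contraction X / e: (V \ {u,v}) together with a new
   vertex (represented by None) standing for e. *)
Definition contr_vert (V : finType) (u v : V) : finType :=
  option {x : V | (x != u) && (x != v)}.

Definition contr_rel (V : finType) (E : rel V) (u v : V) : rel (contr_vert u v) :=
  fun a b => match a, b with
  | Some x, Some y => E (val x) (val y)
  | Some x, None => E (val x) u
  | None, Some y => E v (val y)
  | None, None => false
  end.
Arguments contr_rel {V} E u v.
Arguments contr_vert {V} u v.

(* Deleting e = (u,v) only relaxes the constraints, so u_{X\e}(m) - u_X(m)
   counts the pairs (sigma, f) compatible with X\e but not with X.  In such a
   pair the only violated step is u immediately followed by v with
   f(u) = f(v).  Merging this block into the single vertex e is a bijection
   onto the pairs counted by u_{X/e}(m): the edges entering u and leaving v
   are exactly the edges entering and leaving e in X/e. *)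

From mathcomp Require Import all_boot all_order all_algebra.
Set Implicit Arguments. Unset Strict Implicit. Unset Printing Implicit Defensive.

Lemma permutations_enumP (T : finType) (s : seq T) :
  reflect (uniq s /\ forall x, x \in s) (s \in permutations (enum T)).
Proof.
rewrite mem_permutations; apply: (iffP idP) => [ps | [Us Ts]].
  by split=> [|x]; rewrite ?(perm_uniq ps) ?(perm_mem ps) ?enum_uniq ?mem_enum.
by apply: uniq_perm => // [|x]; rewrite ?enum_uniq ?mem_enum ?Ts.
Qed.

Lemma sum_injective_ffun (T : finType) (F : seq T -> nat) :
  \sum_(sigma : {ffun 'I_#|T| -> T} | injectiveb sigma)
     F [seq sigma i | i <- enum 'I_#|T|] =
  \sum_(s <- permutations (enum T)) F s.
Proof.
rewrite (reindex (@Finfun _ _)) /=; last first.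
  by exists fgraph => t _; rewrite (FinfunK, fgraphK).
under eq_bigl do rewrite /injectiveb /dinjectiveb -codomE codom_ffun FinfunK.
under eq_bigr do rewrite -codomE codom_ffun FinfunK.
rewrite -big_filter -(big_map val xpredT); apply: perm_big.
apply: uniq_perm; rewrite ?permutations_uniq //.
  by rewrite map_inj_uniq ?filter_uniq ?index_enum_uniq //; apply: val_inj.
move=> s; rewrite mem_permutations; apply/mapP/idP => [[t] | ps].
  rewrite mem_filter => /andP[Ut _] ->.
  have [|_ Tt] := @uniq_min_size _ t (enum T) Ut (fun x _ => mem_enum T x).
    by rewrite size_tuple card_ord cardE.
  exact: uniq_perm Ut (enum_uniq T) Tt.
have Ss : size s == #|'I_#|T| | by rewrite card_ord cardE (perm_size ps).
exists (Tuple Ss) => //.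
by rewrite mem_filter mem_index_enum andbT /= (perm_uniq ps) enum_uniq.
Qed.

Lemma redei_bergeE (V : finType) (E : rel V) (m : nat) :
  redei_berge E m =
  \sum_(s <- permutations (enum V))
     #|[set f : {ffun V -> 'I_m} | sorted (compat E f) s]|.
Proof. exact: (sum_injective_ffun (fun s => #|[set f | sorted (compat E f) s]|)). Qed.

Section PairCounting.
Variables (S : eqType) (F : finType).
Implicit Types (l : seq S) (P : S -> F -> bool).

Local Notation pairs l := [seq (s, f) | s <- l, f <- index_enum F].

Lemma sum_card_pairs l P :
  \sum_(s <- l) #|[set f | P s f]| = count (fun p => P p.1 p.2) (pairs l).
Proof.
rewrite -sum1_count [RHS]big_mkcond big_allpairs; apply: eq_bigr => s _.
by rewrite -big_mkcond /= -sum1_card; apply: eq_bigl => f; rewrite inE.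
Qed.

Lemma mem_pairs l p : (p \in pairs l) = (p.1 \in l).
Proof.
apply/allpairsP/idP => [[[s f] [/= sl _ ->]] // | pl].
by exists p; rewrite mem_index_enum; case: p pl.
Qed.

Lemma uniq_pairs l : uniq l -> uniq (pairs l).
Proof.
move=> Ul; apply: allpairs_uniq; rewrite ?index_enum_uniq //.
by move=> [a b] [c d] _ _ [-> ->].
Qed.

End PairCounting.

Lemma count_bij (A B : eqType) (sA : seq A) (sB : seq B) (P : pred A) (Q : pred B)
    (h : A -> B) (h' : B -> A) :
  uniq sA -> uniq sB -> cancel h h' ->
  (forall x, x \in sA -> P x -> h x \in sB /\ Q (h x)) ->
  (forall y, y \in sB -> Q y -> [/\ h' y \in sA, P (h' y) & h (h' y) = y]) ->
  count P sA = count Q sB.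
Proof.
move=> UA UB hK hA hB; rewrite -!size_filter -(size_map h).
apply/perm_size/uniq_perm; rewrite ?(map_inj_uniq (can_inj hK)) ?filter_uniq //.
move=> y; apply/mapP/idP => [[x] | ].
  rewrite mem_filter => /andP[Px /hA/(_ Px)[hxB Qhx]] ->.
  by rewrite mem_filter Qhx.
rewrite mem_filter => /andP[Qy /hB/(_ Qy)[h'yA Ph'y <-]].
by exists (h' y); rewrite ?mem_filter ?Ph'y.
Qed.

Lemma subrel_compat (V : finType) (E E' : rel V) (m : nat) (f : {ffun V -> 'I_m}) :
  subrel E' E -> subrel (compat E f) (compat E' f).
Proof.
move=> E'E x y; rewrite /compat => /andP[-> fxy] /=.
by apply/implyP => /E'E; apply/implyP.
Qed.

Lemma card_sorted_compat_subrel (V : finType) (E E' : rel V) (m : nat) (s : seq V) :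
  subrel E' E ->
  #|[set f : {ffun V -> 'I_m} | sorted (compat E' f) s]| =
  #|[set f : {ffun V -> 'I_m} | sorted (compat E f) s]| +
  #|[set f : {ffun V -> 'I_m} | sorted (compat E' f) s && ~~ sorted (compat E f) s]|.
Proof.
move=> E'E; rewrite -(cardsID [set f | sorted (compat E f) s]); congr (_ + _).
  apply: eq_card => f; rewrite !inE andb_idl //.
  by apply: sub_sorted; apply: subrel_compat.
by apply: eq_card => f; rewrite !inE andbC.
Qed.

Section Contraction.
Variables (V : finType) (E : rel V) (u v : V) (m : nat).
Hypothesis u_neq_v : u != v.

Local Notation C := (contr_vert u v).
Local Notation cE := (contr_rel E u v).
Local Notation dE := (del_rel E u v).
Implicit Types (f : {ffun V -> 'I_m}) (g : {ffun C -> 'I_m}).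

Definition contr_proj (x : V) : C := insub x.

Definition block_head (a : C) : V := if a is Some y then val y else u.
Definition block_last (a : C) : V := if a is Some y then val y else v.
Definition block (a : C) : seq V := if a is Some y then [:: val y] else [:: u; v].

Definition expand (t : seq C) : seq V := flatten (map block t).

(* Inverse of [expand] on sequences with [u] immediately followed by [v]:
   [u] becomes the new vertex and [v] is dropped. *)
Definition contract (s : seq V) : seq C :=
  pmap (fun x => if x == v then None else Some (contr_proj x)) s.

Definition pullback (g : {ffun C -> 'I_m}) : {ffun V -> 'I_m} :=
  [ffun x => g (contr_proj x)].
Definition restrict (f : {ffun V -> 'I_m}) : {ffun C -> 'I_m} :=
  [ffun a => f (block_head a)].

Lemma contr_proj_u : contr_proj u = None.
Proof. by rewrite /contr_proj insubF // eqxx. Qed.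

Lemma contr_proj_v : contr_proj v = None.
Proof. by rewrite /contr_proj insubF // eqxx andbF. Qed.

Lemma contr_proj_val y : contr_proj (val y) = Some y.
Proof. exact: valK. Qed.

Lemma contr_proj_head a : contr_proj (block_head a) = a.
Proof. by case: a => [y|] /=; rewrite ?contr_proj_val ?contr_proj_u. Qed.

Lemma contr_proj_last a : contr_proj (block_last a) = a.
Proof. by case: a => [y|] /=; rewrite ?contr_proj_val ?contr_proj_v. Qed.

Lemma mem_block x a : (x \in block a) = (contr_proj x == a).
Proof.
rewrite /contr_proj; case: insubP => [y _ <-|]; case: a => [z|] /=.
- by rewrite !inE; apply/eqP/eqP => [/val_inj -> | [->]].
- by have /andP[yu yv] := valP y; rewrite !inE (negbTE yu) (negbTE yv).
- by move=> nP; rewrite inE; apply: contraNF nP => /eqP ->; exact: (valP z).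
- by rewrite negb_and !negbK !inE.
Qed.

Lemma expand_cons a t : expand (a :: t) = block a ++ expand t.
Proof. by []. Qed.

Lemma expand_cat t1 t2 : expand (t1 ++ t2) = expand t1 ++ expand t2.
Proof. by rewrite /expand map_cat flatten_cat. Qed.

Lemma mem_expand x t : (x \in expand t) = (contr_proj x \in t).
Proof. by elim: t => [|a t IH] //; rewrite mem_cat mem_block IH inE. Qed.

Lemma uniq_expand t : uniq (expand t) = uniq t.
Proof.
elim: t => [|a t IH] //=; rewrite cat_uniq IH.
have -> : has (mem (block a)) (expand t) = (a \in t).
  apply/hasP/idP => [[x] | a_t].
    by rewrite mem_expand inE mem_block => + /eqP <-.
  exists (block_head a); first by rewrite mem_expand contr_proj_head.
  by change (block_head a \in block a); rewrite mem_block contr_proj_head.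
by case: a {IH} => [y|] //=; rewrite inE u_neq_v andbT.
Qed.

Lemma expand_permutations t :
  t \in permutations (enum C) -> expand t \in permutations (enum V).
Proof.
move=> /permutations_enumP[Ut Ct]; apply/permutations_enumP.
by split=> [|x]; rewrite ?uniq_expand ?mem_expand.
Qed.

Lemma contract_expand t : contract (expand t) = t.
Proof.
elim: t => [|[y|] t IH] //; rewrite /contract /= -/(contract _) IH /=.
  by have /andP[_ /negbTE->] := valP y; rewrite contr_proj_val.
by rewrite eqxx (negbTE u_neq_v) contr_proj_u.
Qed.

Lemma expand_contract_split s1 s2 :
  uniq (s1 ++ u :: v :: s2) ->
  expand (contract (s1 ++ u :: v :: s2)) = s1 ++ u :: v :: s2.
Proof.
have expand_contractK r : u \notin r -> v \notin r -> expand (contract r) = r.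
  elim: r => [|x r IH] //; rewrite !inE !negb_or => /andP[ux ur] /andP[vx vr].
  have Px : (x != u) && (x != v) by rewrite eq_sym ux eq_sym vx.
  rewrite /contract /= eq_sym (negbTE vx) /= -/(contract r).
  by rewrite /contr_proj insubT expand_cons IH.
rewrite cat_uniq /= !inE !negb_or => /and5P[_ /and3P[u1 v1 _] /andP[_ u2] v2 _].
rewrite /contract pmap_cat /= eqxx (negbTE u_neq_v) contr_proj_u -!/(contract _).
by rewrite expand_cat expand_cons !expand_contractK.
Qed.

Lemma restrict_pullback g : restrict (pullback g) = g.
Proof. by apply/ffunP => a; rewrite !ffunE contr_proj_head. Qed.

Lemma pullback_restrict f : f u = f v -> pullback (restrict f) = f.
Proof.
move=> fuv; apply/ffunP => x; rewrite !ffunE /contr_proj.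
by case: insubP => [y _ <- // | ]; rewrite negb_and !negbK => /orP[] /eqP ->.
Qed.

Lemma compat_pullback_uv g : compat dE (pullback g) u v.
Proof.
by rewrite /compat /del_rel !eqxx andbF implyFb andbT !ffunE contr_proj_u contr_proj_v.
Qed.

Lemma compat_pullback_block g a b : a != b ->
  compat dE (pullback g) (block_last a) (block_head b) = compat cE g a b.
Proof.
move=> neq_ab; rewrite /compat !ffunE contr_proj_last contr_proj_head /del_rel.
congr (_ && (_ ==> _)); case: a b neq_ab => [x|] [y|] //= _.
- by have /andP[/negbTE-> _] := valP x; rewrite andbT.
- by have /andP[/negbTE-> _] := valP x; rewrite andbT.
- by rewrite eq_sym (negbTE u_neq_v) andbT.
Qed.

Lemma path_pullback_expand g a t : uniq (a :: t) ->
  path (compat dE (pullback g)) (block_last a) (expand t) = path (compat cE g) a t.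
Proof.
elim: t a => [|b t IH] a //= /andP[]; rewrite inE negb_or => /andP[neq_ab _] Ubt.
rewrite expand_cons -compat_pullback_block // -IH //.
by case: b {neq_ab IH Ubt} => [y|] //=; rewrite compat_pullback_uv.
Qed.

Lemma sorted_pullback_expand g t : uniq t ->
  sorted (compat dE (pullback g)) (expand t) = sorted (compat cE g) t.
Proof.
case: t => [|a t] // Ut; rewrite /= -path_pullback_expand // expand_cons.
by case: a {Ut} => [y|] //=; rewrite compat_pullback_uv.
Qed.

Lemma compat_del_not_compat f x y :
  compat dE f x y -> ~~ compat E f x y -> [/\ x = u, y = v & f u = f v].
Proof.
rewrite /compat /del_rel => /andP[le_xy dxy].
rewrite le_xy negb_imply => /andP[Exy lt_xy].
have /andP[/eqP xu /eqP yv] : (x == u) && (y == v).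
  by apply: contraNT lt_xy => not_uv; apply: (implyP dxy); rewrite Exy.
subst; split=> //; apply/val_inj/eqP.
by rewrite eqn_leq le_xy leqNgt.
Qed.

Lemma sorted_del_not_sorted_split f s :
  sorted (compat dE f) s -> ~~ sorted (compat E f) s ->
  exists s1 s2, s = s1 ++ u :: v :: s2 /\ f u = f v.
Proof.
case: s => [|x s] //=; elim: s x => [|y s IH] x //= /andP[dxy ds].
case Exy: (compat E f x y) => /=.
  by move=> /(IH y ds) [s1 [s2 [-> fuv]]]; exists (x :: s1), s2.
by have [-> -> fuv] := compat_del_not_compat dxy (negbT Exy); exists [::], s.
Qed.

Hypothesis Euv : E u v.

Lemma not_sorted_pullback_expand g t :
  None \in t -> ~~ sorted (compat E (pullback g)) (expand t).
Proof.
case/splitPr => t1 t2; rewrite expand_cat expand_cons sorted_cat_cons /=.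
suff -> : compat E (pullback g) u v = false by rewrite andbF.
by rewrite /compat Euv !ffunE contr_proj_u contr_proj_v ltnn andbF.
Qed.

Lemma sum_card_sorted_del_not_sorted :
  \sum_(s <- permutations (enum V))
     #|[set f : {ffun V -> 'I_m} | sorted (compat dE f) s && ~~ sorted (compat E f) s]| =
  redei_berge cE m.
Proof.
rewrite redei_bergeE !sum_card_pairs; symmetry.
apply: (count_bij (h := fun p => (expand p.1, pullback p.2))
                  (h' := fun p => (contract p.1, restrict p.2))).
- exact/uniq_pairs/permutations_uniq.
- exact/uniq_pairs/permutations_uniq.
- by move=> [t g]; rewrite /= contract_expand restrict_pullback.
- move=> [t g]; rewrite !mem_pairs /= => tP g_sorted.
  have [Ut Ct] := permutations_enumP _ tP.
  rewrite expand_permutations // sorted_pullback_expand //.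
  by rewrite g_sorted not_sorted_pullback_expand.
- move=> [s f]; rewrite !mem_pairs /= => sP /andP[ds nEs].
  have [Us Cs] := permutations_enumP _ sP.
  have [s1 [s2 [Es fuv]]] := sorted_del_not_sorted_split ds nEs.
  have sK : expand (contract s) = s by rewrite Es expand_contract_split -?Es.
  have Ut : uniq (contract s) by rewrite -uniq_expand sK.
  rewrite /= sK pullback_restrict //; split=> //.
    apply/permutations_enumP; split=> // a.
    by rewrite -(contr_proj_head a) -mem_expand sK.
  by rewrite -sorted_pullback_expand // sK pullback_restrict.
Qed.

End Contraction.

Unset Implicit Arguments.
Local Open Scope ring_scope.

Theorem mainTheorem13 (V : finType) (E : rel V) (u v : V) (m : nat) :
  irreflexive E -> E u v ->
  (redei_berge E m)%:Z =
    (redei_berge (del_rel E u v) m)%:Z - (redei_berge (contr_rel E u v) m)%:Z.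
Proof.
move=> irrE Euv.
have u_neq_v : u != v by apply: contraTneq Euv => ->; rewrite irrE.
have del_sub : subrel (del_rel E u v) E by move=> x y /andP[].
rewrite -(sum_card_sorted_del_not_sorted m u_neq_v Euv) !redei_bergeE.
rewrite (eq_bigr _ (fun s _ => card_sorted_compat_subrel m s del_sub)) big_split /=.
by rewrite PoszD GRing.addrK.
Qed.
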